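(* Let $\mathbf C\in\mathbb R^{n\times n}$ and $\mathbf C_1,\dots,\mathbf C_m\in\mathbb R^{n\times n}$ be symmetric positive semidefinite matrices with $\sum_{i=1}^m\mathbf C_i=\mathbf C$. Then $$\sum_{i=1}^m\mathbf C_i\mathbf C^\dagger\mathbf C_i\preceq\mathbf C.$$
   Context: $\mathbf C^\dagger$ is the Moore–Penrose pseudoinverse; $\mathbf X\preceq\mathbf Y$ means $\mathbf Y-\mathbf X$ is positive semidefinite. *)

(* Real matrices are modelled over an arbitrary real field R. *)
From HB Require Import structures.
From mathcomp Require Import all_boot all_order all_algebra.
Set Implicit Arguments. Unset Strict Implicit. Unset Printing Implicit Defensive.
Import Order.TTheory GRing.Theory Num.Theory.
Local Open Scope ring_scope.

Definition psd (R : realFieldType) (n : nat) (A : 'M[R]_n) : Prop :=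
  A^T = A /\ forall v : 'cV[R]_n, 0 <= (v^T *m A *m v) 0 0.

Definition loewner_le (R : realFieldType) (n : nat) (X Y : 'M[R]_n) : Prop :=
  psd (Y - X).

(* X is the Moore-Penrose pseudoinverse of A (the four Penrose conditions;
   over a real field the adjoint is the transpose). *)
Definition is_pinv (R : realFieldType) (n : nat) (A X : 'M[R]_n) : Prop :=
  [/\ A *m X *m A = A, X *m A *m X = X,
      (A *m X)^T = A *m X & (X *m A)^T = X *m A].

From HB Require Import structures.
From mathcomp Require Import all_boot all_order all_algebra.
Import Order.TTheory GRing.Theory Num.Theory.
Set Implicit Arguments. Unset Strict Implicit.
Local Open Scope ring_scope.

(* Write X for the pseudoinverse C^+ of the symmetric matrix C.
   Uniqueness of the Moore-Penrose inverse shows that X is symmetric, and the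
   Penrose condition gives X C X = X.  For a single summand C_i and a vector v
   put y = X C_i v; expanding the quadratic forms yields the completion-of-
   squares identity
     v^T (C_i - C_i X C_i) v = (v - y)^T C_i (v - y) + y^T (C - C_i) y,
   whose right-hand side is nonnegative because C_i and C - C_i = sum_{j<>i} C_j
   are positive semidefinite.  Hence C_i X C_i <= C_i in the Loewner order for
   every i, and summing these m inequalities (PSD matrices are closed under
   finite sums) gives sum_i C_i X C_i <= sum_i C_i = C. *)

Section QuadraticForms.
Variables (R : realFieldType) (n : nat).

Definition qform (A : 'M[R]_n) (v : 'cV[R]_n) : R := (v^T *m A *m v) 0 0.

Lemma qform_sum (I : Type) (r : seq I) (P : pred I) (F : I -> 'M[R]_n)
    (v : 'cV[R]_n) :
  qform (\sum_(i <- r | P i) F i) v = \sum_(i <- r | P i) qform (F i) v.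
Proof. by rewrite /qform mulmx_sumr mulmx_suml summxE. Qed.

Lemma psd_sum (I : Type) (r : seq I) (P : pred I) (F : I -> 'M[R]_n) :
  (forall i, P i -> psd (F i)) -> psd (\sum_(i <- r | P i) F i).
Proof.
move=> psdF; split.
  by rewrite raddf_sum; apply: eq_bigr => i /psdF [].
move=> v; rewrite -/(qform _ v) qform_sum.
by apply: sumr_ge0 => i /psdF [_]; apply.
Qed.

End QuadraticForms.

Section Pseudoinverse.
Variables (R : realFieldType) (n : nat).
Implicit Types A X Y : 'M[R]_n.

Lemma pinv_uniq A X Y : is_pinv A X -> is_pinv A Y -> X = Y.
Proof.
case=> AXA XAX AXs XAs [AYA YAY AYs YAs].
have eX : X = X *m A *m Y.
  have e1 : X = X *m (X^T *m A^T) by rewrite -trmx_mul AXs mulmxA.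
  have e2 : A^T = A^T *m Y^T *m A^T by rewrite -!trmx_mul mulmxA AYA.
  rewrite {1}e1 e2.
  have -> : X^T *m (A^T *m Y^T *m A^T) = (A *m X)^T *m (A *m Y)^T
    by rewrite !trmx_mul !mulmxA.
  by rewrite AXs AYs !mulmxA XAX.
have eY : Y = X *m A *m Y.
  have e1 : Y = A^T *m Y^T *m Y by rewrite -trmx_mul YAs YAY.
  have e2 : A^T = A^T *m X^T *m A^T by rewrite -!trmx_mul mulmxA AXA.
  rewrite {1}e1 e2.
  have -> : A^T *m X^T *m A^T *m Y^T = (X *m A)^T *m (Y *m A)^T
    by rewrite !trmx_mul !mulmxA.
  by rewrite XAs YAs -mulmxA YAY.
by rewrite eY.
Qed.

(* The pseudoinverse of a symmetric matrix is symmetric: X^T satisfies the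
   Penrose conditions for A^T = A as well, so X^T = X by uniqueness. *)
Lemma pinv_sym A X : A^T = A -> is_pinv A X -> X^T = X.
Proof.
move=> As pinvX; symmetry; apply: (pinv_uniq pinvX).
case: pinvX => AXA XAX AXs XAs; split.
- by have := congr1 trmx AXA; rewrite !trmx_mul As mulmxA.
- by have := congr1 trmx XAX; rewrite !trmx_mul As mulmxA.
- by rewrite trmx_mul trmxK As -{1}XAs trmx_mul As.
- by rewrite trmx_mul trmxK As -{1}AXs trmx_mul As.
Qed.

End Pseudoinverse.

Section OneSummand.
Variables (R : realFieldType) (n : nat) (C X B : 'M[R]_n).
Hypotheses (Xsym : X^T = X) (Bsym : B^T = B) (XCX : X *m C *m X = X).

Lemma complete_square (v : 'cV[R]_n) :
  let y := X *m (B *m v) in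
  (v - y)^T *m B *m (v - y) + y^T *m (C - B) *m y
  = v^T *m (B - B *m X *m B) *m v.
Proof.
move=> y.
have yT : y^T = v^T *m B *m X by rewrite /y !trmx_mul Xsym Bsym.
have XCXw (w : 'cV[R]_n) : X *m (C *m (X *m w)) = X *m w by rewrite !mulmxA XCX.
have vyT : (v - y)^T = v^T - v^T *m B *m X by rewrite raddfB /= yT.
rewrite vyT yT /y !(mulmxBl, mulmxBr) -!mulmxA XCXw.
by rewrite subrK.
Qed.

Lemma summand_loewner : psd B -> psd (C - B) -> loewner_le (B *m X *m B) B.
Proof.
move=> [_ psdB] [_ psdCB]; split.
  by rewrite raddfB /= !trmx_mul Xsym Bsym mulmxA.
move=> v; rewrite -(complete_square v) mxE.
by apply: addr_ge0; [apply: psdB | apply: psdCB].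
Qed.

End OneSummand.

Theorem lemma1 (R : realFieldType) (n m : nat) (C Cdag : 'M[R]_n)
  (Cs : 'I_m -> 'M[R]_n) :
  (forall i, psd (Cs i)) -> psd C -> \sum_(i < m) Cs i = C ->
  is_pinv C Cdag ->
  loewner_le (\sum_(i < m) (Cs i *m Cdag *m Cs i)) C.
Proof.
move=> psdCs [Csym _] sumC pinvC.
have Xsym := pinv_sym Csym pinvC.
have XCX : Cdag *m C *m Cdag = Cdag by case: pinvC.
(* C minus one summand is the (PSD) sum of the remaining summands. *)
have psd_rest i : psd (C - Cs i).
  rewrite -sumC (bigD1 i) //= addrC addrK.
  by apply: psd_sum => j _; apply: psdCs.
rewrite /loewner_le -{1}sumC -sumrB.
apply: psd_sum => i _.
exact: summand_loewner Xsym (proj1 (psdCs i)) XCX (psdCs i) (psd_rest i).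
Qed.
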